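(* Let $(\mathfrak{g},[\cdot,\cdot]_{\mathfrak{g}},\phi_{\mathfrak{g}})$ be a finite-dimensional weakly involutive Hom-Lie algebra and let $r\in\mathfrak g\otimes\mathfrak g$ satisfy $(\phi_{\mathfrak g}\otimes\mathrm{Id})r=(\mathrm{Id}\otimes\phi_{\mathfrak g})r$. Define $\Delta:\mathfrak g\to\mathfrak g\otimes\mathfrak g$ by $\Delta(x)=(\mathrm{ad}_x\otimes\phi_{\mathfrak g}+\phi_{\mathfrak g}\otimes\mathrm{ad}_x)r$ and a bilinear map $[\cdot,\cdot]_{\mathfrak g^*}$ on $\mathfrak g^*$ by $\langle[a,b]_{\mathfrak g^*},x\rangle=\langle\Delta(x),a\otimes b\rangle$. Then $(\mathfrak g^*,[\cdot,\cdot]_{\mathfrak g^*},\phi_{\mathfrak g}^* )$ is a weakly involutive Hom-Lie algebra if and only if (i) $(\mathrm{ad}_x\otimes\phi_{\mathfrak g}+\phi_{\mathfrak g}\otimes\mathrm{ad}_x)(r+\sigma(r))=0$ for all $x\in\mathfrak g$, and (ii) $(\mathrm{ad}_{\phi_{\mathfrak g}(x)}\otimes\phi_{\mathfrak g}\otimes\phi_{\mathfrak g}+\phi_{\mathfrak g}\otimes\mathrm{ad}_{\phi_{\mathfrak g}(x)}\otimes\phi_{\mathfrak g}+\phi_{\mathfrak g}\otimes\phi_{\mathfrak g}\otimes\mathrm{ad}_{\phi_{\mathfrak g}(x)})[r,r]_{\mathfrak g}=0$ for all $x\in\mathfrak g$. Under these conditions, $(\mathfrak g,\mathfrak g^* )$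 is a coboundary Hom-Lie bialgebra.
   Context: A Hom-Lie algebra $(\mathfrak{g},[\cdot,\cdot]_{\mathfrak{g}},\phi_{\mathfrak{g}})$ is a vector space with a skew-symmetric bilinear map $[\cdot,\cdot]_{\mathfrak g}$ and a linear map $\phi_{\mathfrak g}$ with $\phi_{\mathfrak g}[x,y]_{\mathfrak g}=[\phi_{\mathfrak g}(x),\phi_{\mathfrak g}(y)]_{\mathfrak g}$ and $[\phi_{\mathfrak g}(x),[y,z]_{\mathfrak g}]_{\mathfrak g}+[\phi_{\mathfrak g}(y),[z,x]_{\mathfrak g}]_{\mathfrak g}+[\phi_{\mathfrak g}(z),[x,y]_{\mathfrak g}]_{\mathfrak g}=0$; it is weakly involutive if $[\phi_{\mathfrak g}^2(x),y]_{\mathfrak g}=[x,y]_{\mathfrak g}$ for all $x,y$. $\mathrm{ad}_xy=[x,y]_{\mathfrak g}$; for $t\in\mathfrak g\otimes\mathfrak g$ and $z\in\mathfrak g$ write $\mathrm{ad}_zt=(\mathrm{ad}_z\otimes\phi_{\mathfrak g}+\phi_{\mathfrak g}\otimes\mathrm{ad}_z)t$. $\phi_{\mathfrak g}^*$ is the dual map. For $r=\sum_i x_i\otimes y_i$, $\sigma(r)=\sum_i y_i\otimes x_i$ and $[r,r]_{\mathfrak g}=\sum_{i,j}\big([x_i,x_j]_{\mathfrak g}\otimes\phi_{\mathfrak g}(y_i)\otimes\phi_{\mathfrak g}(y_j)+\phi_{\mathfrak g}(x_i)\otimes[y_i,x_j]_{\mathfrak g}\otimes\phi_{\mathfrak g}(y_j)+\phi_{\mathfrak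 g}(x_i)\otimes\phi_{\mathfrak g}(x_j)\otimes[y_i,y_j]_{\mathfrak g}\big)$. A Hom-Lie bialgebra $(\mathfrak g,\mathfrak g^* )$ is a pair of weakly involutive Hom-Lie algebras $(\mathfrak{g},[\cdot,\cdot]_{\mathfrak{g}},\phi_{\mathfrak{g}})$ and $(\mathfrak g^*,[\cdot,\cdot]_{\mathfrak g^*},\phi_{\mathfrak g}^* )$ such that the map $\Delta:\mathfrak g\to\mathfrak g\otimes\mathfrak g$ dual to $[\cdot,\cdot]_{\mathfrak g^*}$ (i.e. $\langle\Delta(x),a\otimes b\rangle=\langle x,[a,b]_{\mathfrak g^*}\rangle$) satisfies $\Delta[x,y]_{\mathfrak g}=\mathrm{ad}_{\phi_{\mathfrak g}(x)}\Delta(y)-\mathrm{ad}_{\phi_{\mathfrak g}(y)}\Delta(x)$ for all $x,y$. It is a coboundary Hom-Lie bialgebra if moreover $\Delta(x)=(\mathrm{ad}_x\otimes\phi_{\mathfrak g}+\phi_{\mathfrak g}\otimes\mathrm{ad}_x)r$ for some $r\in\mathfrak g\otimes\mathfrak g$ with $(\phi_{\mathfrak g}\otimes\mathrm{Id})r=(\mathrm{Id}\otimes\phi_{\mathfrak g})r$. *)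

(* A finite-dimensional vector space over a field K is
   modelled as 'rV[K]_n with standard basis e_i; its dual g^* is modelled as
   'rV[K]_n in the dual basis, with pairing <a, x> = sum_i a_i x_i.
   g (x) g is modelled by n x n matrices (coefficients on e_i (x) e_j),
   g (x) g (x) g by finite functions on 'I_n * 'I_n * 'I_n. *)
From HB Require Import structures.
From mathcomp Require Import all_boot all_order all_algebra.
Set Implicit Arguments.
Unset Strict Implicit.
Unset Printing Implicit Defensive.
Import Order.TTheory GRing.Theory.
Local Open Scope ring_scope.

Section HomLie.
Variables (K : fieldType) (n : nat).
Notation V := 'rV[K]_n.
Notation T2 := 'M[K]_n.
Notation T3 := {ffun 'I_n * 'I_n * 'I_n -> K}.

Definition ebasis (i : 'I_n) : V := delta_mx 0 i.

Definition pairing (a x : V) : K := \sum_i a 0 i * x 0 i.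

Definition hom_lie (br : V -> V -> V) (phi : V -> V) : Prop :=
  (forall (k : K) x y, phi (k *: x + y) = k *: phi x + phi y) /\
  [/\ (forall (k : K) x y z, br (k *: x + y) z = k *: br x z + br y z),
      (forall (k : K) x y z, br z (k *: x + y) = k *: br z x + br z y),
      (forall x y, br x y = - br y x),
      (forall x y, phi (br x y) = br (phi x) (phi y)) &
      (forall x y z, br (phi x) (br y z) + br (phi y) (br z x)
                     + br (phi z) (br x y) = 0)].

Definition weakly_involutive (br : V -> V -> V) (phi : V -> V) : Prop :=
  forall x y, br (phi (phi x)) y = br x y.

Definition tens2 (u v : V) : T2 := \matrix_(k, l) (u 0 k * v 0 l).
Definition tens3 (u v w : V) : T3 :=
  [ffun p : 'I_n * 'I_n * 'I_n => u 0 p.1.1 * v 0 p.1.2 * w 0 p.2].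

Definition tmap2 (f g : V -> V) (t : T2) : T2 :=
  \sum_i \sum_j t i j *: tens2 (f (ebasis i)) (g (ebasis j)).
Definition tmap3 (f g h : V -> V) (t : T3) : T3 :=
  [ffun p => \sum_i \sum_j \sum_k t (i, j, k) *
     tens3 (f (ebasis i)) (g (ebasis j)) (h (ebasis k)) p].

Definition tsigma (t : T2) : T2 := t^T.

Definition ad2 (br : V -> V -> V) (phi : V -> V) (z : V) (t : T2) : T2 :=
  tmap2 (br z) phi t + tmap2 phi (br z) t.

(* [r, r]_g, computed from the decomposition r = sum_(a,b) (r a b e_a) (x) e_b *)
Definition rr (br : V -> V -> V) (phi : V -> V) (r : T2) : T3 :=
  [ffun p => \sum_a \sum_b \sum_c \sum_d (r a b * r c d) *
    (tens3 (br (ebasis a) (ebasis c)) (phi (ebasis b)) (phi (ebasis d)) p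
     + tens3 (phi (ebasis a)) (br (ebasis b) (ebasis c)) (phi (ebasis d)) p
     + tens3 (phi (ebasis a)) (phi (ebasis c)) (br (ebasis b) (ebasis d)) p)].

Definition dualmap (phi : V -> V) (a : V) : V :=
  \row_k pairing a (phi (ebasis k)).

Definition pair2 (t : T2) (a b : V) : K := \sum_i \sum_j t i j * a 0 i * b 0 j.

Definition cob_delta (br : V -> V -> V) (phi : V -> V) (r : T2) (x : V) : T2 :=
  ad2 br phi x r.

Definition dual_bracket (br : V -> V -> V) (phi : V -> V) (r : T2)
  (a b : V) : V :=
  \row_k pair2 (cob_delta br phi r (ebasis k)) a b.

Definition delta_of (brd : V -> V -> V) (x : V) : T2 :=
  \matrix_(i, j) pairing (brd (ebasis i) (ebasis j)) x.

Definition hom_lie_bialgebra (br : V -> V -> V) (phi : V -> V)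
  (brd : V -> V -> V) : Prop :=
  [/\ hom_lie br phi, weakly_involutive br phi,
      hom_lie brd (dualmap phi), weakly_involutive brd (dualmap phi) &
      forall x y, delta_of brd (br x y)
        = ad2 br phi (phi x) (delta_of brd y)
          - ad2 br phi (phi y) (delta_of brd x)].

Definition coboundary_hom_lie_bialgebra (br : V -> V -> V) (phi : V -> V)
  (brd : V -> V -> V) : Prop :=
  hom_lie_bialgebra br phi brd /\
  exists r' : T2, tmap2 phi id r' = tmap2 id phi r' /\
    forall x, delta_of brd x = ad2 br phi x r'.

End HomLie.

(* Every identity is tested on (multi)linear forms: a 2-tensor t is known
   through the numbers <t, F>, and <(f (x) g) t, F> = <t, F (f _) (g _)>.  In
   particular <[a, b]_*, x> is r contracted with ad_x acting on a (x) b, so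
   statements about the dual bracket become statements about r.  The hypothesis
   (phi (x) id) r = (id (x) phi) r lets phi move from one leg of r to the other;
   together with weak involutivity (phi^2 is invisible inside a bracket) this
   makes phi^* a weakly involutive morphism of the dual bracket for every such r.
   Skew-symmetry of the dual bracket says that Delta(x) is skew, which is
   condition (i).  Given (i), the dual Hom-Jacobiator paired with x and the
   tensor of condition (ii) paired with a (x) b (x) c both expand, through the
   Hom-Jacobi identity of g, into contractions of r (x) r that agree up to forms
   symmetrised in the two legs of some Delta(v), which (i) kills.  Finally the
   Hom-Jacobi identity makes Delta = ad r a cocycle, so r itself exhibits the
   coboundary structure. *)

From HB Require Import structures.
From mathcomp Require Import all_boot all_order all_algebra.
From mathcomp Require Import ring.
Set Implicit Arguments.
Unset Strict Implicit.
Unset Printing Implicit Defensive.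
Import GRing.Theory.
Local Open Scope ring_scope.

Section Contraction.
Variables (K : fieldType) (n : nat).
Local Notation V := 'rV[K]_n.
Local Notation T3 := {ffun 'I_n * 'I_n * 'I_n -> K}.
Local Notation e := (@ebasis K n).

Lemma scalarD (g : V -> K) : scalar g -> {morph g : x y / x + y}.
Proof. by move=> gL; exact: (GRing.semilinear_linear gL).2. Qed.

Lemma scalar_expand (g : V -> K) (u : V) :
  scalar g -> g u = \sum_k u 0 k * g (e k).
Proof.
move=> gL; pose G : {scalar V} := HB.pack g (GRing.isLinear.Build K V K *%R g gL).
rewrite -[g]/(G : V -> K) {1}(row_sum_delta u) linear_sum.
by apply: eq_bigr => k _; rewrite linearZ.
Qed.

Lemma scalar_add (g h : V -> K) : scalar g -> scalar h -> scalar (fun v => g v + h v).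
Proof. by move=> gL hL k x y; rewrite gL hL; ring. Qed.
Lemma scalar_mull (c : K) (g : V -> K) : scalar g -> scalar (fun v => c * g v).
Proof. by move=> gL k x y; rewrite gL; ring. Qed.
Lemma scalar_mulr (c : K) (g : V -> K) : scalar g -> scalar (fun v => g v * c).
Proof. by move=> gL k x y; rewrite gL; ring. Qed.
Lemma linear_idfun : linear (fun v : V => v).
Proof. by []. Qed.

Lemma scalar_comp (g : V -> K) (f : V -> V) : scalar g -> linear f -> scalar (fun v => g (f v)).
Proof. by move=> gL fL k x y; rewrite fL gL. Qed.

Lemma pairing_scalar (a : V) : scalar (pairing a).
Proof.
move=> k x y; rewrite /pairing mulr_sumr -big_split /=.
by apply: eq_bigr => i _; rewrite !mxE mulrDr mulrCA.
Qed.
HB.instance Definition _ (a : V) :=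
  GRing.isLinear.Build K V K *%R (pairing a) (pairing_scalar a).

Lemma pairingC (a b : V) : pairing a b = pairing b a.
Proof. by apply: eq_bigr => i _; rewrite mulrC. Qed.

Lemma pairingPl k (a b x : V) : pairing (k *: a + b) x = k * pairing a x + pairing b x.
Proof. by rewrite !(pairingC _ x) linearP. Qed.

Lemma pairingDl (a b x : V) : pairing (a + b) x = pairing a x + pairing b x.
Proof. by rewrite -[a]scale1r pairingPl scale1r mul1r. Qed.

Lemma pairing0l (x : V) : pairing 0 x = 0.
Proof. by rewrite pairingC linear0. Qed.

Lemma pairing_ebasis (a : V) i : pairing a (e i) = a 0 i.
Proof.
rewrite /pairing (bigD1 i) //= big1 ?addr0 => [|j /negPf nji];
  by rewrite /ebasis mxE ?eqxx ?nji ?andbF ?mulr1 ?mulr0.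
Qed.

Lemma pairing_ebasisl (a : V) i : pairing (e i) a = a 0 i.
Proof. by rewrite pairingC pairing_ebasis. Qed.

Lemma sum_mul_delta (G : 'I_n -> K) m : \sum_k G k * (k == m)%:R = G m.
Proof. by rewrite (bigD1 m) //= big1 ?addr0 ?eqxx ?mulr1 // => k /negPf ->; rewrite mulr0. Qed.

Lemma ebasisE i k : e i 0 k = (i == k)%:R.
Proof. by rewrite /ebasis mxE eqxx eq_sym. Qed.

Definition bilinear_form (F : V -> V -> K) :=
  (forall w, scalar (F^~ w)) /\ (forall u, scalar (F u)).

Lemma bilinear_formDl F u1 u2 w : bilinear_form F -> F (u1 + u2) w = F u1 w + F u2 w.
Proof. by case=> FL _; exact: (scalarD (FL w)). Qed.
Lemma bilinear_formDr F u w1 w2 : bilinear_form F -> F u (w1 + w2) = F u w1 + F u w2.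
Proof. by case=> _ FL; exact: (scalarD (FL u)). Qed.

Lemma bilinear_form_comp F (f g : V -> V) :
  bilinear_form F -> linear f -> linear g -> bilinear_form (fun p q => F (f p) (g q)).
Proof.
case=> FL1 FL2 fL gL; split=> w.
  exact: scalar_comp (FL1 (g w)) fL.
exact: scalar_comp (FL2 (f w)) gL.
Qed.

Lemma bilinear_expand F (u v : V) : bilinear_form F ->
  F u v = \sum_k \sum_l u 0 k * v 0 l * F (e k) (e l).
Proof.
case=> FL1 FL2; rewrite (scalar_expand u (FL1 v)).
apply: eq_bigr => k _; rewrite (scalar_expand v (FL2 (e k))) mulr_sumr.
by apply: eq_bigr => l _; rewrite mulrA [u 0 k * _]mulrC.
Qed.

Definition form2 (a b : V) (u v : V) : K := pairing a u * pairing b v.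
Definition form3 (a b c : V) (u v w : V) : K := pairing a u * pairing b v * pairing c w.

Lemma bilinear_form2 a b : bilinear_form (form2 a b).
Proof. by split=> w k x y; rewrite /form2 /= linearP /=; ring. Qed.

Lemma scalar_form3l a b c (f : V -> V) v w :
  linear f -> scalar (fun u => form3 a b c (f u) v w).
Proof. by move=> fL k x y; rewrite /form3 fL linearP /=; ring. Qed.
Lemma scalar_form3m a b c (f : V -> V) u w :
  linear f -> scalar (fun v => form3 a b c u (f v) w).
Proof. by move=> fL k x y; rewrite /form3 fL linearP /=; ring. Qed.
Lemma scalar_form3r a b c (f : V -> V) u v :
  linear f -> scalar (fun w => form3 a b c u v (f w)).
Proof. by move=> fL k x y; rewrite /form3 fL linearP /=; ring. Qed.

Definition contract (F : V -> V -> K) (t : 'M[K]_n) : K :=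
  \sum_i \sum_j t i j * F (e i) (e j).

Lemma contract_scalar F : scalar (contract F).
Proof.
move=> c t s; rewrite /contract mulr_sumr -big_split; apply: eq_bigr => i _ /=.
by rewrite mulr_sumr -big_split; apply: eq_bigr => j _ /=; rewrite !mxE; ring.
Qed.
HB.instance Definition _ F :=
  GRing.isLinear.Build K 'M[K]_n K *%R (contract F) (contract_scalar F).

Lemma eq_contract F G t : F =2 G -> contract F t = contract G t.
Proof. by move=> FG; apply: eq_bigr => i _; apply: eq_bigr => j _; rewrite FG. Qed.

Lemma contract_addf F G t :
  contract (fun p q => F p q + G p q) t = contract F t + contract G t.
Proof.
rewrite /contract -big_split; apply: eq_bigr => i _ /=.
by rewrite -big_split; apply: eq_bigr => j _; rewrite mulrDr.
Qed.

Lemma contract_scalef c F t : contract (fun p q => c * F p q) t = c * contract F t.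
Proof.
rewrite /contract mulr_sumr; apply: eq_bigr => i _ /=.
by rewrite mulr_sumr; apply: eq_bigr => j _; rewrite mulrCA.
Qed.

Lemma contract_oppf F t : contract (fun p q => - F p q) t = - contract F t.
Proof. by rewrite -mulN1r -contract_scalef; apply: eq_contract => p q; rewrite mulN1r. Qed.

Lemma contract_tens2 F u v : bilinear_form F -> contract F (tens2 u v) = F u v.
Proof.
move=> FL; rewrite (bilinear_expand u v FL).
by apply: eq_bigr => i _; apply: eq_bigr => j _; rewrite mxE.
Qed.

Lemma contract_tmap2 F f g t : bilinear_form F ->
  contract F (tmap2 f g t) = contract (fun p q => F (f p) (g q)) t.
Proof.
move=> FL; rewrite /tmap2 linear_sum; apply: eq_bigr => i _.
by rewrite linear_sum; apply: eq_bigr => j _; rewrite linearZ /= contract_tens2.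
Qed.

Lemma contract_tsigma F t : contract F (tsigma t) = contract (fun p q => F q p) t.
Proof.
rewrite /contract exchange_big; apply: eq_bigr => i _; apply: eq_bigr => j _.
by rewrite mxE.
Qed.

Lemma contract_exchange (H : V -> V -> V -> V -> K) t s :
  contract (fun p q => contract (H p q) s) t
  = contract (fun p' q' => contract (fun p q => H p q p' q') t) s.
Proof.
rewrite /contract; under eq_bigr => i _ do under eq_bigr => j _ do rewrite mulr_sumr.
under eq_bigr => i _ do rewrite exchange_big.
rewrite exchange_big; apply: eq_bigr => k _.
under eq_bigr => i _ do under eq_bigr => j _ do rewrite mulr_sumr.
under eq_bigr => i _ do rewrite exchange_big.
rewrite exchange_big /=; apply: eq_bigr => l _.
rewrite mulr_sumr; apply: eq_bigr => i _; rewrite mulr_sumr; apply: eq_bigr => j _.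
by rewrite mulrCA.
Qed.

Lemma scalar_contract (H : V -> V -> V -> K) t :
  (forall p q, scalar (fun v => H v p q)) -> scalar (fun v => contract (H v) t).
Proof.
move=> HL k x y; rewrite /contract mulr_sumr -big_split; apply: eq_bigr => i _ /=.
by rewrite mulr_sumr -big_split; apply: eq_bigr => j _ /=; rewrite HL; ring.
Qed.

Lemma contract_form2_ebasis t i j : contract (form2 (e i) (e j)) t = t i j.
Proof.
rewrite /contract; under eq_bigr => k _ do under eq_bigr => l _ do
  rewrite /form2 !pairing_ebasisl !ebasisE mulrA mulrAC.
by under eq_bigr => k _ do rewrite -mulr_suml sum_mul_delta; rewrite sum_mul_delta.
Qed.

Lemma eq_contract_form2 t s :
  (forall i j, contract (form2 (e i) (e j)) t = contract (form2 (e i) (e j)) s) -> t = s.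
Proof. by move=> ts; apply/matrixP => i j; rewrite -!contract_form2_ebasis ts. Qed.

Lemma pair2_contract t a b : pair2 t a b = contract (form2 a b) t.
Proof.
by apply: eq_bigr => i _; apply: eq_bigr => j _; rewrite /form2 !pairing_ebasis mulrA.
Qed.

Lemma pairing_dualmap (f : V -> V) (a u : V) :
  linear f -> pairing (dualmap f a) u = pairing a (f u).
Proof.
move=> fL; rewrite (scalar_expand u (scalar_comp (pairing_scalar a) fL)).
by apply: eq_bigr => k _; rewrite mxE mulrC.
Qed.

Lemma dualmap_linear (f : V -> V) : linear (dualmap f).
Proof. by move=> k a b; apply/matrixP => i j; rewrite !mxE !(pairingC _ (f _)) linearP. Qed.

Definition pairing3 (a b c : V) (T : T3) : K :=
  \sum_i \sum_j \sum_k T (i, j, k) * form3 a b c (e i) (e j) (e k).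

Lemma pairing3D a b c (T S : T3) : pairing3 a b c (T + S) = pairing3 a b c T + pairing3 a b c S.
Proof.
rewrite /pairing3 -big_split; apply: eq_bigr => i _ /=; rewrite -big_split.
by apply: eq_bigr => j _ /=; rewrite -big_split; apply: eq_bigr => k _ /=; rewrite ffunE mulrDl.
Qed.

Lemma pairing30 a b c : pairing3 a b c 0 = 0.
Proof.
rewrite /pairing3 big1 // => i _; rewrite big1 // => j _.
by rewrite big1 // => k _; rewrite ffunE mul0r.
Qed.

Lemma pairing3_sum a b c I (s : seq I) (P : pred I) (F : I -> 'I_n * 'I_n * 'I_n -> K) :
  pairing3 a b c [ffun p => \sum_(q <- s | P q) F q p]
  = \sum_(q <- s | P q) pairing3 a b c [ffun p => F q p].
Proof.
rewrite /pairing3; under eq_bigr => i _ do under eq_bigr => j _ do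
  under eq_bigr => k _ do rewrite ffunE mulr_suml.
under eq_bigr => i _ do under eq_bigr => j _ do rewrite exchange_big.
under eq_bigr => i _ do rewrite exchange_big.
rewrite exchange_big; apply: eq_bigr => q _.
by apply: eq_bigr => i _; apply: eq_bigr => j _; apply: eq_bigr => k _; rewrite ffunE.
Qed.

Lemma pairing3_scale a b c w (F : 'I_n * 'I_n * 'I_n -> K) :
  pairing3 a b c [ffun p => w * F p] = w * pairing3 a b c [ffun p => F p].
Proof.
rewrite /pairing3 mulr_sumr; apply: eq_bigr => i _; rewrite mulr_sumr.
by apply: eq_bigr => j _; rewrite mulr_sumr; apply: eq_bigr => k _; rewrite !ffunE mulrA.
Qed.

Lemma pairing3_add a b c (F G : 'I_n * 'I_n * 'I_n -> K) :
  pairing3 a b c [ffun p => F p + G p]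
  = pairing3 a b c [ffun p => F p] + pairing3 a b c [ffun p => G p].
Proof.
rewrite -pairing3D; congr pairing3; apply/ffunP => p; by rewrite !ffunE.
Qed.

Lemma pairing3_tens3 a b c u v w :
  pairing3 a b c [ffun p => tens3 u v w p] = form3 a b c u v w.
Proof.
rewrite /pairing3; under eq_bigr => i _ do under eq_bigr => j _ do
  under eq_bigr => k _ do rewrite !ffunE /form3 !pairing_ebasis.
rewrite /form3 /pairing !mulr_suml; apply: eq_bigr => i _.
rewrite -mulrA mulr_suml mulr_sumr; apply: eq_bigr => j _.
by rewrite !mulr_sumr; apply: eq_bigr => k _; ring.
Qed.

Lemma pairing3_ebasis i j k (T : T3) : pairing3 (e i) (e j) (e k) T = T (i, j, k).
Proof.
rewrite /pairing3; under eq_bigr => i' _ do under eq_bigr => j' _ do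
  under eq_bigr => k' _ do rewrite /form3 !pairing_ebasisl !ebasisE !mulrA mulrAC.
under eq_bigr => i' _ do under eq_bigr => j' _ do rewrite -mulr_suml sum_mul_delta.
under eq_bigr => i' _ do under eq_bigr => j' _ do rewrite mulrAC.
by under eq_bigr => i' _ do rewrite -mulr_suml sum_mul_delta; rewrite sum_mul_delta.
Qed.

Lemma pairing3_tmap3 f g h a b c T :
  pairing3 a b c (tmap3 f g h T) = pairing3 (dualmap f a) (dualmap g b) (dualmap h c) T.
Proof.
rewrite /tmap3 pairing3_sum; apply: eq_bigr => i _; rewrite pairing3_sum.
apply: eq_bigr => j _; rewrite pairing3_sum; apply: eq_bigr => k _.
by rewrite pairing3_scale pairing3_tens3 /form3 !pairing_ebasis !mxE.
Qed.

Lemma pairing3_rr a b c (br : V -> V -> V) (phi : V -> V) (r : 'M[K]_n) :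
  pairing3 a b c (rr br phi r)
  = contract (fun p q => contract (fun p' q' =>
        form3 a b c (br p p') (phi q) (phi q') + form3 a b c (phi p) (br q p') (phi q')
      + form3 a b c (phi p) (phi p') (br q q')) r) r.
Proof.
rewrite /rr pairing3_sum; apply: eq_bigr => i _; rewrite pairing3_sum.
apply: eq_bigr => j _; rewrite pairing3_sum mulr_sumr; apply: eq_bigr => k _.
rewrite pairing3_sum mulr_sumr; apply: eq_bigr => l _.
by rewrite pairing3_scale !pairing3_add !pairing3_tens3 mulrA.
Qed.

Lemma form3_dualmap (f g h : V -> V) a b c u v w : linear f -> linear g -> linear h ->
  form3 (dualmap f a) (dualmap g b) (dualmap h c) u v w = form3 a b c (f u) (g v) (h w).
Proof. by move=> fL gL hL; rewrite /form3 !pairing_dualmap. Qed.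

Lemma pairing3_tmap3_rr (f g h : V -> V) a b c br (phi : V -> V) r :
  linear f -> linear g -> linear h ->
  pairing3 a b c (tmap3 f g h (rr br phi r))
  = contract (fun p q => contract (fun p' q' =>
        form3 a b c (f (br p p')) (g (phi q)) (h (phi q'))
      + form3 a b c (f (phi p)) (g (br q p')) (h (phi q'))
      + form3 a b c (f (phi p)) (g (phi p')) (h (br q q'))) r) r.
Proof.
move=> fL gL hL; rewrite pairing3_tmap3 pairing3_rr.
by apply: eq_contract => p q; apply: eq_contract => p' q'; rewrite !form3_dualmap.
Qed.

End Contraction.

Arguments linear_idfun {K n}.

Section CoboundaryDualBracket.
Variables (K : fieldType) (n : nat).
Local Notation V := 'rV[K]_n.
Local Notation e := (@ebasis K n).
Variables (br : V -> V -> V) (phi : V -> V) (r : 'M[K]_n).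
Hypothesis phi_linear : linear phi.
Hypothesis br_linear : forall z, linear (br z).
Hypothesis brC : forall x y, br x y = - br y x.
Hypothesis phi_br : forall x y, phi (br x y) = br (phi x) (phi y).
Hypothesis br_jacobi : forall x y z,
  br (phi x) (br y z) + br (phi y) (br z x) + br (phi z) (br x y) = 0.
Hypothesis br_phi2 : forall x y, br (phi (phi x)) y = br x y.
Hypothesis r_phi : tmap2 phi id r = tmap2 id phi r.

HB.instance Definition _ := GRing.isLinear.Build K V V *:%R phi phi_linear.
HB.instance Definition _ z := GRing.isLinear.Build K V V *:%R (br z) (br_linear z).

Local Notation brd := (dual_bracket br phi r).
Local Notation dphi := (dualmap phi).
Local Notation Delta := (cob_delta br phi r).

Definition dual_jacobiator (a b c : V) : V :=
  brd (dphi a) (brd b c) + brd (dphi b) (brd c a) + brd (dphi c) (brd a b).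

Definition ad_rr (x : V) : {ffun 'I_n * 'I_n * 'I_n -> K} :=
  tmap3 (br (phi x)) phi phi (rr br phi r) + tmap3 phi (br (phi x)) phi (rr br phi r)
  + tmap3 phi phi (br (phi x)) (rr br phi r).

Lemma br_linearl z : linear (br^~ z).
Proof. by move=> k x y; rewrite /= brC linearP opprD -scalerN -!brC. Qed.

Lemma br_phi2r x y : br x (phi (phi y)) = br x y.
Proof. by rewrite brC br_phi2 -brC. Qed.

Lemma phi2_br x y : phi (phi (br x y)) = br x y.
Proof. by rewrite !phi_br br_phi2 br_phi2r. Qed.

Lemma br_phi_leibniz x y z : br (phi x) (br y z) = br (br x y) (phi z) + br (phi y) (br x z).
Proof.
have /eqP := br_jacobi x y z.
by rewrite (brC z x) linearN (brC (phi z)) -addrA -opprD subr_eq0 addrC => /eqP.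
Qed.

Lemma linear_phi_comp (f : V -> V) : linear f -> linear (fun v => phi (f v)).
Proof. by move=> fL k x y; rewrite fL linearP. Qed.

Ltac linearity := repeat (first
  [ apply: scalar_contract => ? ? | apply: scalar_add
  | apply: scalar_form3l | apply: scalar_form3m | apply: scalar_form3r
  | apply: scalar_mulr | apply: scalar_mull | apply: (scalar_comp (pairing_scalar _))
  | exact: linear_idfun | exact: phi_linear | exact: br_linear | exact: br_linearl
  | apply: linear_phi_comp ]; cbv beta).
Ltac bilinearity := split=> ?; cbv beta; linearity.

Lemma contract_r_phiC G : bilinear_form G ->
  contract (fun p q => G (phi p) q) r = contract (fun p q => G p (phi q)) r.
Proof.
move=> GL; transitivity (contract G (tmap2 phi id r)); first by rewrite contract_tmap2.
by rewrite r_phi contract_tmap2.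
Qed.

Lemma contract_r_phi2C G : bilinear_form G ->
  contract (fun p q => G (phi (phi p)) q) r = contract (fun p q => G p (phi (phi q))) r.
Proof.
move=> GL; rewrite (contract_r_phiC (bilinear_form_comp GL phi_linear linear_idfun)).
exact: (contract_r_phiC (bilinear_form_comp GL linear_idfun phi_linear)).
Qed.

(* Move [phi] across [r] three times, then let [f] swallow [phi^2]. *)
Lemma contract_r_absorbl (f : V -> V) H : linear f -> (forall s, f (phi (phi s)) = f s) ->
  bilinear_form H ->
  contract (fun p q => H (f (phi p)) (phi (phi q))) r = contract (fun p q => H (f p) (phi q)) r.
Proof.
move=> fL fphi2 HL; have GL := bilinear_form_comp HL fL linear_idfun.
rewrite -(contract_r_phiC (bilinear_form_comp GL phi_linear phi_linear)).
rewrite -(contract_r_phiC (bilinear_form_comp GL (linear_phi_comp phi_linear) linear_idfun)).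
by rewrite -(contract_r_phiC GL); apply: eq_contract => p q; rewrite fphi2.
Qed.

Lemma contract_r_absorbr (f : V -> V) H : linear f -> (forall s, f (phi (phi s)) = f s) ->
  bilinear_form H ->
  contract (fun p q => H (phi (phi p)) (f (phi q))) r = contract (fun p q => H (phi p) (f q)) r.
Proof.
move=> fL fphi2 HL; have GL := bilinear_form_comp HL linear_idfun fL.
rewrite (contract_r_phiC (bilinear_form_comp GL phi_linear phi_linear)).
rewrite (contract_r_phiC (bilinear_form_comp GL linear_idfun (linear_phi_comp phi_linear))).
by rewrite (contract_r_phiC GL); apply: eq_contract => p q; rewrite fphi2.
Qed.

Definition ad_form (z : V) (F : V -> V -> K) (p q : V) : K :=
  F (br z p) (phi q) + F (phi p) (br z q).

Lemma contract_ad2 z F t : bilinear_form F ->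
  contract F (ad2 br phi z t) = contract (ad_form z F) t.
Proof. by move=> FL; rewrite /ad2 linearD /= !contract_tmap2 // -contract_addf. Qed.

Lemma eq_contract_ad_form z F G t : F =2 G ->
  contract (ad_form z F) t = contract (ad_form z G) t.
Proof. by move=> FG; apply: eq_contract => p q; rewrite /ad_form !FG. Qed.

Lemma contract_ad_form_addf z F G t :
  contract (ad_form z (fun u v => F u v + G u v)) t
  = contract (ad_form z F) t + contract (ad_form z G) t.
Proof. by rewrite -contract_addf; apply: eq_contract => p q; rewrite /ad_form addrACA. Qed.

Lemma contract_ad_form_oppf z F t :
  contract (ad_form z (fun u v => - F u v)) t = - contract (ad_form z F) t.
Proof. by rewrite -contract_oppf; apply: eq_contract => p q; rewrite /ad_form opprD. Qed.

Lemma contract_ad_form0 z t : contract (ad_form z (fun _ _ => 0)) t = 0.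
Proof.
by rewrite /contract big1 // => i _; rewrite big1 // => j _; rewrite /ad_form addr0 mulr0.
Qed.

Lemma pairing_dual_bracket a b x : pairing (brd a b) x = contract (ad_form x (form2 a b)) r.
Proof.
have deltaL : scalar (fun z => contract (ad_form z (form2 a b)) r).
  by rewrite /ad_form /form2; linearity.
rewrite [RHS](scalar_expand x deltaL : _ = \sum_k x 0 k * _) /pairing.
apply: eq_bigr => k _.
by rewrite mxE pair2_contract /cob_delta contract_ad2 1?mulrC //; exact: bilinear_form2.
Qed.

Lemma dual_bracket_linearl k a b c : brd (k *: a + b) c = k *: brd a c + brd b c.
Proof.
apply/matrixP => i j; rewrite !mxE !pair2_contract -contract_scalef -contract_addf.
by apply: eq_contract => u v; rewrite /form2 pairingPl; ring.
Qed.

Lemma dual_bracket_linearr k a b c : brd c (k *: a + b) = k *: brd c a + brd c b.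
Proof.
apply/matrixP => i j; rewrite !mxE !pair2_contract -contract_scalef -contract_addf.
by apply: eq_contract => u v; rewrite /form2 pairingPl; ring.
Qed.

Lemma contract_ad2_r_sym x F : bilinear_form F ->
  contract F (ad2 br phi x (r + tsigma r)) = contract (ad_form x (fun u v => F u v + F v u)) r.
Proof.
move=> FL; rewrite contract_ad2 // linearD /= contract_tsigma -contract_addf.
by apply: eq_contract => p q; rewrite /ad_form; ring.
Qed.

Lemma cond_i_dual_bracket_skew :
  (forall x, ad2 br phi x (r + tsigma r) = 0) <-> (forall a b, brd a b = - brd b a).
Proof.
have form2C (a b u v : V) : form2 a b v u = form2 b a u v by rewrite /form2 mulrC.
split=> [cond_i a b | skew x].
  apply/rowP => k; rewrite [RHS]mxE -!pairing_ebasis !pairing_dual_bracket.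
  apply/eqP; rewrite -addr_eq0 -contract_ad_form_addf; apply/eqP.
  under eq_contract_ad_form => u v do rewrite -(form2C a b).
  by rewrite -(contract_ad2_r_sym _ (bilinear_form2 a b)) cond_i linear0.
apply: eq_contract_form2 => i j; rewrite linear0 contract_ad2_r_sym; last exact: bilinear_form2.
under eq_contract_ad_form => u v do rewrite (form2C _ _ u v).
by rewrite contract_ad_form_addf -!pairing_dual_bracket -pairingDl skew addNr pairing0l.
Qed.

Lemma bilinear_ad_form z F : bilinear_form F -> bilinear_form (ad_form z F).
Proof.
case=> FL1 FL2; split=> w; apply: scalar_add.
- exact: scalar_comp (FL1 (phi w)) (br_linear z).
- exact: scalar_comp (FL1 (br z w)) phi_linear.
- exact: scalar_comp (FL2 (br z w)) phi_linear.
- exact: scalar_comp (FL2 (phi w)) (br_linear z).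
Qed.

Lemma contract_ad_form_phi z F : bilinear_form F ->
  contract (ad_form (phi z) F) r = contract (ad_form z (fun u v => F (phi u) (phi v))) r.
Proof.
move=> FL; rewrite /ad_form; under [RHS]eq_contract => p q do rewrite !phi_br.
rewrite !contract_addf (contract_r_absorbl (br_linear _) (br_phi2r _) FL).
by rewrite (contract_r_absorbr (br_linear _) (br_phi2r _) FL).
Qed.

Lemma contract_ad_form_phi2 z F : bilinear_form F ->
  contract (ad_form z (fun u v => F (phi (phi u)) v)) r = contract (ad_form z F) r.
Proof.
move=> FL; rewrite /ad_form !contract_addf; congr (_ + _).
  by apply: eq_contract => p q; rewrite phi2_br.
rewrite (contract_r_phi2C (bilinear_form_comp FL phi_linear (br_linear z))).
by apply: eq_contract => p q; rewrite br_phi2r.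
Qed.

Lemma dualmap_dual_bracket a b : dphi (brd a b) = brd (dphi a) (dphi b).
Proof.
apply/rowP => k; rewrite mxE -pairing_ebasis !pairing_dual_bracket.
rewrite contract_ad_form_phi; last exact: bilinear_form2.
by apply: eq_contract_ad_form => u v; rewrite /form2 !pairing_dualmap.
Qed.

Lemma dual_bracket_weakly_involutive a b : brd (dphi (dphi a)) b = brd a b.
Proof.
apply/rowP => k; rewrite -!pairing_ebasis !pairing_dual_bracket.
rewrite -(contract_ad_form_phi2 _ (bilinear_form2 a b)).
by apply: eq_contract_ad_form => u v; rewrite /form2 !pairing_dualmap //; exact: linear_phi_comp.
Qed.

(* The Leibniz form of Hom-Jacobi handles the terms carrying [phi^2]; the
   remaining ones cancel because [phi] is multiplicative. *)
Lemma contract_ad_form_br x y F : bilinear_form F ->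
  contract (ad_form (br x y) F) r
  = contract (ad_form y (ad_form (phi x) F)) r - contract (ad_form x (ad_form (phi y) F)) r.
Proof.
move=> FL; rewrite /ad_form !contract_addf.
rewrite -(contract_r_absorbl (br_linear _) (br_phi2r _) FL).
rewrite -(contract_r_absorbr (br_linear _) (br_phi2r _) FL).
rewrite -!contract_addf -contract_oppf -contract_addf; apply: eq_contract => p q.
rewrite (br_phi_leibniz x y p) (br_phi_leibniz x y q) !phi_br.
by rewrite !(bilinear_formDl _ _ _ FL) !(bilinear_formDr _ _ _ FL); ring.
Qed.

Lemma cob_delta_br x y :
  Delta (br x y) = ad2 br phi (phi x) (Delta y) - ad2 br phi (phi y) (Delta x).
Proof.
apply: eq_contract_form2 => i j; have FL := bilinear_form2 (e i) (e j).
rewrite linearB /cob_delta /= !contract_ad2 ?contract_ad_form_br //; exact: bilinear_ad_form.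
Qed.

Lemma delta_of_dual_bracket z : delta_of brd z = Delta z.
Proof.
apply/matrixP => i j; rewrite mxE pairing_dual_bracket -contract_form2_ebasis.
by rewrite /cob_delta contract_ad2 //; exact: bilinear_form2.
Qed.

Section DualJacobi.
Variables a b c : V.
Local Notation M := (form3 a b c).

Definition jacobi_form (u v : V) : K := contract (fun p q =>
    M (phi u) (br v p) (phi q) + M (phi u) (phi p) (br v q)
  + M (phi q) (phi u) (br v p) + M (br v q) (phi u) (phi p)
  + M (br v p) (phi q) (phi u) + M (phi p) (br v q) (phi u)) r.

Definition cond_ii_form (u v : V) : K := contract (fun p q =>
    M (br u p) (phi v) (phi q) + M (phi u) (br v p) (phi q) + M (phi u) (phi p) (br v q)
  + M (br p u) (phi q) (phi v) + M (phi p) (br q u) (phi v) + M (phi p) (phi u) (br q v)) r.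

Lemma pairing_dual_jacobiator x :
  pairing (dual_jacobiator a b c) x = contract (ad_form x jacobi_form) r.
Proof.
rewrite /dual_jacobiator !pairingDl !pairing_dual_bracket -!contract_ad_form_addf.
apply: eq_contract_ad_form => u v; rewrite /form2 !pairing_dualmap // !pairing_dual_bracket.
rewrite /jacobi_form /ad_form -!contract_scalef -!contract_addf.
by apply: eq_contract => p q; rewrite /form2 /form3; ring.
Qed.

(* The nine terms of condition (ii) paired with [a (x) b (x) c], sorted by
   which of the two copies of [r] in [[r, r]] ends up carrying [ad_x]. *)
Definition cond_ii_left (u v p q : V) : K :=
    M (br u (phi p)) (phi v) (phi (phi q)) + M (phi u) (br v (phi p)) (phi (phi q))
  + M (phi u) (phi (phi p)) (br v (phi q)).
Definition cond_ii_right (p q u v : V) : K :=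
    M (br (phi p) u) (phi (phi q)) (phi v) + M (phi (phi p)) (br (phi q) u) (phi v)
  + M (phi (phi p)) (phi u) (br (phi q) v).

Lemma pairing3_cond_ii_split x :
  pairing3 a b c (ad_rr x)
  = contract (ad_form x (fun u v => contract (cond_ii_left u v) r)) r
  + contract (ad_form x (fun u v => contract (fun p q => cond_ii_right p q u v) r)) r.
Proof.
have brxL := br_linear (phi x).
rewrite /ad_rr !pairing3D !pairing3_tmap3_rr // /ad_form.
under [X in _ = _ + X]eq_contract => p q do rewrite -contract_addf.
rewrite [X in _ = _ + X]contract_exchange.
under [X in _ = X + _]eq_contract => p q do rewrite -contract_addf.
rewrite -!contract_addf; apply: eq_contract => p q; rewrite -!contract_addf.
apply: eq_contract => p' q'; rewrite /cond_ii_left /cond_ii_right.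
rewrite (br_phi_leibniz x p p') (br_phi_leibniz x q p') (br_phi_leibniz x q q') !phi_br.
by rewrite /form3 !linearD /=; ring.
Qed.

Lemma pairing3_cond_ii x : pairing3 a b c (ad_rr x) = contract (ad_form x cond_ii_form) r.
Proof.
rewrite pairing3_cond_ii_split -contract_ad_form_addf; apply: eq_contract_ad_form => u v.
have L1 : bilinear_form (fun s w => M s (phi v) w) by bilinearity.
have L2 : bilinear_form (fun s w => M (phi u) s w) by bilinearity.
have L3 : bilinear_form (fun s w => M s w (phi v)) by bilinearity.
have L4 : bilinear_form (fun s w => M s (phi u) w) by bilinearity.
rewrite /cond_ii_left /cond_ii_right !contract_addf.
rewrite (contract_r_absorbl (br_linear u) (br_phi2r u) L1).
rewrite (contract_r_absorbl (br_linear v) (br_phi2r v) L2).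
rewrite (contract_r_absorbr (br_linear v) (br_phi2r v) L2).
rewrite (contract_r_absorbl (br_linearl u) (br_phi2^~ u) L3).
rewrite (contract_r_absorbr (br_linearl u) (br_phi2^~ u) L3).
rewrite (contract_r_absorbr (br_linearl v) (br_phi2^~ v) L4).
by rewrite /cond_ii_form !contract_addf !addrA.
Qed.

Hypothesis cond_i : forall x, ad2 br phi x (r + tsigma r) = 0.

Lemma contract_ad_form_sym x F : bilinear_form F ->
  contract (ad_form x (fun u v => F u v + F v u)) r = 0.
Proof. by move=> FL; rewrite -contract_ad2_r_sym // cond_i linear0. Qed.

(* The two integrands differ by three symmetrised forms, killed by the
   skew-symmetry of [Delta x], and by a form vanishing at each [(u, v)] by the
   skew-symmetry of [Delta v]. *)
Lemma contract_ad_form_jacobi x :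
  contract (ad_form x jacobi_form) r = contract (ad_form x cond_ii_form) r.
Proof.
pose A u v := contract (fun p q => M (br v p) (phi q) (phi u)) r.
pose B u v := contract (fun p q => M (phi p) (br v q) (phi u)) r.
pose W u v := contract (fun p q => M (br u p) (phi v) (phi q)) r.
pose P u v := contract (ad_form v (fun s w => M s (phi u) w + M w (phi u) s)) r.
have jacobiE u v : jacobi_form u v
    = cond_ii_form u v + (A u v + A v u) + (B u v + B v u) - (W u v + W v u) + P u v.
  rewrite /jacobi_form /cond_ii_form /A /B /W /P /ad_form opprD.
  rewrite -!contract_oppf -!contract_addf; apply: eq_contract => p q /=.
  by rewrite (brC p u) (brC q u) (brC q v) /form3 !linearN /=; ring.
have AL : bilinear_form A by rewrite /A; bilinearity.
have BL : bilinear_form B by rewrite /B; bilinearity.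
have WL : bilinear_form W by rewrite /W; bilinearity.
have P0 u v : P u v = 0 by apply: contract_ad_form_sym; bilinearity.
rewrite (eq_contract_ad_form _ _ jacobiE) 4!contract_ad_form_addf contract_ad_form_oppf.
rewrite (contract_ad_form_sym x AL) (contract_ad_form_sym x BL) (contract_ad_form_sym x WL).
by rewrite (eq_contract_ad_form _ _ P0) contract_ad_form0 oppr0 !addr0.
Qed.

Lemma pairing_dual_jacobiatorE x :
  pairing (dual_jacobiator a b c) x = pairing3 a b c (ad_rr x).
Proof. by rewrite pairing_dual_jacobiator contract_ad_form_jacobi pairing3_cond_ii. Qed.

End DualJacobi.

Lemma dual_jacobi_iff_cond_ii : (forall x, ad2 br phi x (r + tsigma r) = 0) ->
  (forall a b c, dual_jacobiator a b c = 0) <-> (forall x, ad_rr x = 0).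
Proof.
move=> cond_i; split=> [jacobi x | cond_ii a b c].
  apply/ffunP => -[[i j] k]; rewrite [RHS]ffunE -pairing3_ebasis.
  by rewrite -(pairing_dual_jacobiatorE _ _ _ cond_i) jacobi pairing0l.
apply/rowP => k; rewrite [RHS]mxE -pairing_ebasis.
by rewrite (pairing_dual_jacobiatorE _ _ _ cond_i) cond_ii pairing30.
Qed.

Lemma dual_hom_lie_iff :
  (hom_lie brd dphi /\ weakly_involutive brd dphi) <->
  (forall x, ad2 br phi x (r + tsigma r) = 0) /\ (forall x, ad_rr x = 0).
Proof.
split=> [[[_ [_ _ skew _ jacobi]] _] | [cond_i cond_ii]].
  have cond_i := proj2 cond_i_dual_bracket_skew skew.
  by split=> //; apply/(dual_jacobi_iff_cond_ii cond_i).
split; last exact: dual_bracket_weakly_involutive.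
split; first exact: dualmap_linear.
split; [exact: dual_bracket_linearl | exact: dual_bracket_linearr
       | exact/cond_i_dual_bracket_skew | exact: dualmap_dual_bracket
       | exact/(dual_jacobi_iff_cond_ii cond_i)].
Qed.

Lemma coboundary_dual_bracket : hom_lie br phi ->
  hom_lie brd dphi -> weakly_involutive brd dphi -> coboundary_hom_lie_bialgebra br phi brd.
Proof.
move=> hL hLd hWd; split; last by exists r; split=> // x; rewrite delta_of_dual_bracket.
by split=> // x y; rewrite !delta_of_dual_bracket; exact: cob_delta_br.
Qed.

End CoboundaryDualBracket.

Theorem theorem4p4 (K : fieldType) (n : nat)
  (br : 'rV[K]_n -> 'rV[K]_n -> 'rV[K]_n) (phi : 'rV[K]_n -> 'rV[K]_n)
  (r : 'M[K]_n) :
  hom_lie br phi -> weakly_involutive br phi ->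
  tmap2 phi id r = tmap2 id phi r ->
  let brd := dual_bracket br phi r in
  let cond_i := forall x, ad2 br phi x (r + tsigma r) = 0 in
  let cond_ii := forall x,
      tmap3 (br (phi x)) phi phi (rr br phi r)
      + tmap3 phi (br (phi x)) phi (rr br phi r)
      + tmap3 phi phi (br (phi x)) (rr br phi r) = 0 in
  ((hom_lie brd (dualmap phi) /\ weakly_involutive brd (dualmap phi))
     <-> (cond_i /\ cond_ii))
  /\ (cond_i /\ cond_ii -> coboundary_hom_lie_bialgebra br phi brd).
Proof.
move=> hL hW hr brd cond_i cond_ii.
case: (hL) => phiL [_ brL brC phi_br br_jacobi].
have br_linear z : linear (br z) by move=> k x y; exact: brL.
have dual_iff : hom_lie brd (dualmap phi) /\ weakly_involutive brd (dualmap phi)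
    <-> cond_i /\ cond_ii by exact: dual_hom_lie_iff.
split=> // /dual_iff [hLd hWd].
exact: coboundary_dual_bracket.
Qed.
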